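(* Let $R$ be a commutative Noetherian ring, $M$ a finitely generated $R$-module, $\mathscr{E}$ an $R$-submodule of $\mathrm{Hom}_R(M,R)$, and $S \subseteq M$ a subset. Suppose $F \subseteq \langle S\rangle$ is a free $\mathscr{E}$-summand of $M$ of rank $i$, with split surjection $\varphi: M \to F \cong R^i$ (restricting to the identity on $F$) whose coordinates lie in $\mathscr{E}$. Let $M' = \ker(\varphi)$, so $M = F \oplus M'$, let $S'$ be the projection of $S$ to $M'$ along this direct sum, and let $\mathscr{E}' = \{f|_{M'} : f \in \mathscr{E}\} \subseteq \mathrm{Hom}_R(M',R)$ be the projection of $\mathscr{E}$ to $\mathrm{Hom}_R(M',R)$. Then for all $\mathfrak{p} \in \mathrm{Spec}(R)$, $\delta^{\mathscr{E}'}_\mathfrak{p}(S',M') = \delta^{\mathscr{E}}_\mathfrak{p}(S,M) - i$.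
   Context: $\langle S\rangle$ is the submodule generated by $S$. For an $R$-submodule $\mathscr{E}$ of $\mathrm{Hom}_R(M,R)$ and a prime $\mathfrak{p}$, $\mathscr{E}_\mathfrak{p}$ is viewed inside $\mathrm{Hom}_{R_\mathfrak{p}}(M_\mathfrak{p},R_\mathfrak{p})$. A free $\mathscr{E}_\mathfrak{p}$-summand of $M_\mathfrak{p}$ is a direct summand $F$ (with complement $G$) of $M_\mathfrak{p}$, $F \cong R_\mathfrak{p}^n$, such that each coordinate of the projection $M_\mathfrak{p} \to F \cong R_\mathfrak{p}^n$ along $G$ lies in $\mathscr{E}_\mathfrak{p}$; free $\mathscr{E}$-summands of $M$ are defined the same way over $R$. $\delta^{\mathscr{E}}_\mathfrak{p}(S,M)$ is the largest integer $n \ge 0$ such that there is a free $\mathscr{E}_\mathfrak{p}$-summand of $M_\mathfrak{p}$ of rank $n$ contained in $\langle S\rangle_\mathfrak{p}$. *)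

From HB Require Import structures.
From mathcomp Require Import all_boot all_order all_algebra.
Set Implicit Arguments. Unset Strict Implicit. Unset Printing Implicit Defensive.
Import GRing.Theory.
Local Open Scope ring_scope.

(* Conventions: subsets are Prop-valued predicates; the localization at a
   prime p is modelled by fractions (numerator, denominator) with the usual
   equivalence relation (setoid-style, no quotient type). *)

Section RingDefs.
Variable R : comPzRingType.

Definition is_ideal (I : R -> Prop) :=
  I 0 /\ (forall x y, I x -> I y -> I (x + y)) /\ (forall a x, I x -> I (a * x)).

Definition prime_ideal (p : R -> Prop) :=
  is_ideal p /\ ~ p 1 /\ (forall a b, p (a * b) -> p a \/ p b).

Definition noetherian :=
  forall I : R -> Prop, is_ideal I ->
    exists n (g : 'I_n -> R),
      forall x, I x <-> exists c : 'I_n -> R, x = \sum_(k < n) c k * g k.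
End RingDefs.

Section ModDefs.
Variables (R : comPzRingType) (M : lmodType R).

Definition gen_span (S : M -> Prop) (m : M) :=
  exists n (v : 'I_n -> M) (c : 'I_n -> R),
    (forall k, S (v k)) /\ m = \sum_(k < n) c k *: v k.

Definition fin_gen :=
  exists n (g : 'I_n -> M), forall m, exists c : 'I_n -> R, m = \sum_(k < n) c k *: g k.

Definition lin_fun (f : M -> R) := forall a x y, f (a *: x + y) = a * f x + f y.

Definition hom_submod (E : (M -> R) -> Prop) :=
  (forall f, E f -> lin_fun f) /\ E (fun _ => 0) /\
  (forall f g, E f -> E g -> E (fun x => f x + g x)) /\
  (forall a f, E f -> E (fun x => a * f x)).

Variable p : R -> Prop.

(* x = x.1 / x.2 is an element of N_p *)
Definition lfrac (N : M -> Prop) (x : M * R) := N x.1 /\ ~ p x.2.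
Definition feq (x y : M * R) :=
  exists u, ~ p u /\ u *: (y.2 *: x.1 - x.2 *: y.1) = 0.
Definition req (a b : R * R) :=
  exists u, ~ p u /\ u * (b.2 * a.1 - a.2 * b.1) = 0.
Definition fadd (x y : M * R) : M * R := (y.2 *: x.1 + x.2 *: y.1, x.2 * y.2).
Definition fscale (a : R * R) (x : M * R) : M * R := (a.1 *: x.1, a.2 * x.2).
Definition fzero : M * R := (0, 1).
Definition lcomb n (c : 'I_n -> R * R) (b : 'I_n -> M * R) : M * R :=
  \big[fadd/fzero]_(k < n) fscale (c k) (b k).

Definition lsubmod (N : M -> Prop) (F : M * R -> Prop) :=
  (forall x, F x -> lfrac N x) /\
  (forall x y, F x -> lfrac N y -> feq x y -> F y) /\
  F fzero /\ (forall x y, F x -> F y -> F (fadd x y)) /\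
  (forall a x, ~ p a.2 -> F x -> F (fscale a x)).

(* F is a free E_p-summand of N_p of rank n: N_p = F (+) G, F has an R_p-basis
   b (giving F ~= R_p^n), and the coordinates of the projection N_p -> F along G
   are elements e/u of E_p (e in E, u not in p). *)
Definition free_E_summand (N : M -> Prop) (E : (M -> R) -> Prop)
    (F : M * R -> Prop) (n : nat) :=
  exists (G : M * R -> Prop) (b : 'I_n -> M * R),
    [/\ lsubmod N F, lsubmod N G,
        (forall x, lfrac N x -> exists f g, [/\ F f, G g & feq x (fadd f g)]),
        (forall x, F x -> G x -> feq x fzero) &
        [/\ (forall k, F (b k)),
            (forall x, F x -> exists c : 'I_n -> R * R,
                 (forall k, ~ p (c k).2) /\ feq x (lcomb c b)),
            (forall c : 'I_n -> R * R, (forall k, ~ p (c k).2) ->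
                 feq (lcomb c b) fzero -> forall k, req (c k) (0, 1)) &
            exists (e : 'I_n -> M -> R) (u : 'I_n -> R),
              (forall k, E (e k) /\ ~ p (u k)) /\
              forall x, lfrac N x -> exists g, G g /\
                feq x (fadd (lcomb (fun k => (e k x.1, u k * x.2)) b) g)]].

Definition lspan (N : M -> Prop) (S : M -> Prop) (x : M * R) :=
  lfrac N x /\ exists m t, [/\ gen_span S m, ~ p t & feq x (m, t)].

Definition has_summand N E S n :=
  exists F, free_E_summand N E F n /\ forall x, F x -> lspan N S x.

Definition delta_is N E S (d : nat) :=
  has_summand N E S d /\ forall n, has_summand N E S n -> (n <= d)%N.
End ModDefs.

From HB Require Import structures.
From mathcomp Require Import all_boot all_order all_algebra.
From Stdlib Require Import Classical ClassicalEpsilon.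
From mathcomp Require Import ring.
Set Implicit Arguments. Unset Strict Implicit. Unset Printing Implicit Defensive.
Import GRing.Theory.
Local Open Scope ring_scope.

(* Over R_p, a free E_p-summand of rank n of N_p lying in <S>_p exists iff there
   are s_1, ..., s_n in N /\ <S> and e_1, ..., e_n in E whose pairing matrix
   (e_j (s_k)) has determinant outside p (a "unit pairing"). Given a unit pairing,
   the adjugate turns the e_j into coordinates of a projection onto the span of
   the s_k; conversely, the projection coordinates of a free summand, evaluated
   on its basis, form a matrix that is locally diagonal with unit entries.
   Hence delta^E_p(S, N) is the largest n admitting a unit pairing; it is finite
   because a pairing matrix factors through R^g when M is generated by g
   elements.
   For M = F (+) M', a unit pairing for (S', M', E') extends by the basis of F
   and the coordinates of phi to a block-triangular one for (S, M, E). Conversely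
   the pairing matrix of a unit pairing of size n + i for (S, M, E) differs from
   the pairing matrix of the projected elements by a matrix of rank <= i, so the
   latter still has an n-minor outside p: an ideal containing the k-minors of B
   contains the (k + j)-minors of B + X Y when X Y has inner dimension j. *)

(** * Ideals of minors *)

Section IdealOfMinors.
Variables (R : comPzRingType) (p : R -> Prop).
Hypothesis p_ideal : is_ideal p.

Lemma ideal0 : p 0. Proof. by case: p_ideal. Qed.

Lemma idealD a b : p a -> p b -> p (a + b).
Proof. by case: p_ideal => _ [+ _]; apply. Qed.

Lemma idealMl a b : p b -> p (a * b).
Proof. by case: p_ideal => _ [_ +]; apply. Qed.

Lemma ideal_sum (I : finType) (F : I -> R) : (forall i, p (F i)) -> p (\sum_i F i).
Proof. by move=> pF; apply: big_ind => //; [exact: ideal0 | exact: idealD]. Qed.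

Definition minors_in k m n (B : 'M[R]_(m, n)) :=
  forall (r : 'I_k -> 'I_m) (c : 'I_k -> 'I_n), p (\det (mxsub r c B)).

Lemma minors_in_mxsub k m n m' n' (r : 'I_m' -> 'I_m) (c : 'I_n' -> 'I_n)
    (B : 'M_(m, n)) :
  minors_in k B -> minors_in k (mxsub r c B).
Proof. by move=> pB r' c'; rewrite -mxsub_comp. Qed.

Lemma minors_in0 k m n : minors_in k.+1 (0 : 'M_(m, n)).
Proof. by move=> r c; rewrite linear0 det0; apply: ideal0. Qed.

Lemma minors_in_full n (A : 'M_n) : minors_in n A -> p (\det A).
Proof. by move=> /(_ id id); rewrite mxsub_id. Qed.

Lemma minors_in_cofactor k (C : 'M_k.+1) i j : minors_in k C -> p (cofactor C i j).
Proof. by move=> pC; apply: idealMl; have := pC (lift i) (lift j); rewrite mxsubrc. Qed.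

Lemma minors_in_det k (C : 'M_k.+1) : minors_in k C -> p (\det C).
Proof.
move=> pC; rewrite (expand_det_row _ 0); apply: ideal_sum => j.
by apply: idealMl; apply: minors_in_cofactor.
Qed.

(* det (C + X Y) is the determinant of the bordered matrix [1 Y; -X C]; expanding
   that along its first row, then along its first column, only produces k-minors
   of C. *)
Lemma minors_in_det_rank_one_update k (C : 'M_k.+1) (X : 'cV_k.+1) (Y : 'rV_k.+1) :
  minors_in k C -> p (\det (C + X *m Y)).
Proof.
move=> pC.
have -> : \det (C + X *m Y) = \det (block_mx 1%:M Y (- X) C :> 'M_(1 + k.+1)).
  have -> : block_mx 1%:M Y (- X) C =
            block_mx 1%:M 0 (- X) 1%:M *m block_mx 1%:M Y 0 (C + X *m Y).
    by rewrite mulmx_block !mul1mx !mul0mx !mulmx1 !addr0 mulNmx addrCA addNr addr0.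
  by rewrite det_mulmx det_lblock det_ublock !det1 !mul1r.
set B := block_mx _ _ _ _.
have BE a b : B (rshift 1 a) (rshift 1 b) = C a b by rewrite block_mxEdr.
have lift_rshift (a : 'I_k.+1) : lift (lshift k.+1 (0 : 'I_1)) a = rshift 1 a.
  exact: val_inj.
clearbody B.
rewrite (expand_det_row _ (lshift _ 0)) big_split_ord /= big_ord1.
apply: idealD.
  apply: idealMl; apply: idealMl.
  suff -> : row' (lshift k.+1 0) (col' (lshift k.+1 0) B) = C by apply: minors_in_det.
  by apply/matrixP => a b; rewrite !mxE !lift_rshift BE.
apply: ideal_sum => j; apply: idealMl; apply: idealMl.
rewrite (expand_det_col _ 0); apply: ideal_sum => i; apply: idealMl; apply: idealMl.
suff -> : row' i (col' 0 (row' (lshift k.+1 0) (col' (rshift 1 j) B))) =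
          mxsub (lift i) (lift j) C by [].
apply/matrixP => a b; rewrite !mxE lift_rshift.
have -> : lift (rshift 1 j) (lift 0 b) = rshift 1 (lift j b).
  by apply: val_inj => /=; rewrite /bump /= leq_add2l addnCA.
by rewrite BE.
Qed.
Lemma minors_in_rank_one_update k m n (B : 'M_(m, n)) (X : 'cV_m) (Y : 'rV_n) :
  minors_in k B -> minors_in k.+1 (B + X *m Y).
Proof.
move=> pB r c; rewrite linearD /= mxsub_mul.
by apply: minors_in_det_rank_one_update; apply: minors_in_mxsub.
Qed.

Lemma minors_in_low_rank_update j k m n (B : 'M_(m, n)) (X : 'M_(m, j)) (Y : 'M_(j, n)) :
  minors_in k B -> minors_in (k + j) (B + X *m Y).
Proof.
elim: j k B X Y => [|j IH] k B X Y pB; first by rewrite thinmx0 mul0mx addr0 addn0.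
have := mul_row_col (lsubmx (X : 'M_(m, 1 + j))) (rsubmx (X : 'M_(m, 1 + j)))
  (usubmx (Y : 'M_(1 + j, n))) (dsubmx (Y : 'M_(1 + j, n))).
rewrite hsubmxK vsubmxK => ->; rewrite addrA.
by rewrite -addSnnS; apply/IH/minors_in_rank_one_update.
Qed.
End IdealOfMinors.

Section PrimeIdeal.
Variables (R : comPzRingType) (p : R -> Prop).
Hypothesis p_prime : prime_ideal p.

Lemma prime_is_ideal : is_ideal p. Proof. by case: p_prime. Qed.

Lemma prime_notin1 : ~ p 1. Proof. by case: p_prime => _ []. Qed.

Lemma prime_notinM a b : ~ p a -> ~ p b -> ~ p (a * b).
Proof. by case: p_prime => _ [_ pM] pa pb /pM []. Qed.

Lemma prime_notin_prod (I : finType) (P : pred I) (F : I -> R) :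
  (forall i, ~ p (F i)) -> ~ p (\prod_(i | P i) F i).
Proof.
move=> pF; apply: (big_ind (fun x => ~ p x)) => //.
  exact: prime_notin1.
exact: prime_notinM.
Qed.

Lemma prime_notinX a n : ~ p a -> ~ p (a ^+ n).
Proof. by move=> pa; rewrite -(card_ord n) -prodr_const; apply: prime_notin_prod. Qed.

End PrimeIdeal.

(** * Submodules, spans and linear forms *)

Section SubmodulePredicates.
Variables (R : comPzRingType) (M : lmodType R).

Definition is_submod (N : M -> Prop) :=
  N 0 /\ forall a x y, N x -> N y -> N (a *: x + y).

Definition lin_on (N : M -> Prop) (f : M -> R) :=
  forall a x y, N x -> N y -> f (a *: x + y) = a * f x + f y.

Definition comb_closed (N : M -> Prop) (E : (M -> R) -> Prop) :=
  forall n (a : 'I_n -> R) (e : 'I_n -> M -> R), (forall l, E (e l)) ->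
    exists f, E f /\ forall x, N x -> f x = \sum_l a l * e l x.

Variable N : M -> Prop.
Hypothesis N_submod : is_submod N.

Lemma submod0 : N 0. Proof. by case: N_submod. Qed.

Lemma submodZD a x y : N x -> N y -> N (a *: x + y).
Proof. by case: N_submod => _; apply. Qed.

Lemma submodD x y : N x -> N y -> N (x + y).
Proof. by move=> Nx Ny; rewrite -[x]scale1r; apply: submodZD. Qed.

Lemma submodZ a x : N x -> N (a *: x).
Proof. by move=> Nx; rewrite -[_ *: _]addr0; apply: submodZD => //; apply: submod0. Qed.

Lemma submodB x y : N x -> N y -> N (x - y).
Proof. by move=> Nx Ny; rewrite -scaleN1r addrC; apply: submodZD. Qed.

Lemma submod_sum n (c : 'I_n -> R) (v : 'I_n -> M) :
  (forall k, N (v k)) -> N (\sum_k c k *: v k).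
Proof.
by move=> Nv; apply: big_ind => [||k _]; [exact: submod0 | exact: submodD | exact: submodZ].
Qed.

Variables (f : M -> R).
Hypothesis f_lin : lin_on N f.

Lemma lin_on0 : f 0 = 0.
Proof.
have := f_lin 1 submod0 submod0; rewrite scale1r addr0 mul1r => f00.
by apply: (@addrI _ (f 0)); rewrite addr0 -f00.
Qed.

Lemma lin_onD x y : N x -> N y -> f (x + y) = f x + f y.
Proof. by move=> Nx Ny; rewrite -[x]scale1r f_lin // mul1r scale1r. Qed.

Lemma lin_onZ a x : N x -> f (a *: x) = a * f x.
Proof. by move=> Nx; have := f_lin a Nx submod0; rewrite !addr0 lin_on0 addr0. Qed.

Lemma lin_onB x y : N x -> N y -> f (x - y) = f x - f y.
Proof. by move=> Nx Ny; rewrite -scaleN1r addrC f_lin // mulN1r addrC. Qed.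

Lemma lin_on_sum n (c : 'I_n -> R) (v : 'I_n -> M) :
  (forall k, N (v k)) -> f (\sum_k c k *: v k) = \sum_k c k * f (v k).
Proof.
elim: n c v => [|n IH] c v Nv; first by rewrite !big_ord0 lin_on0.
rewrite !big_ord_recl lin_onD ?IH ?lin_onZ //; first exact: submodZ.
exact: submod_sum.
Qed.

End SubmodulePredicates.

Section Span.
Variables (R : comPzRingType) (M : lmodType R) (S : M -> Prop).

Lemma gen_span_submod : is_submod (gen_span S).
Proof.
split; first by exists 0%N, (fun _ => 0), (fun _ => 0); split=> [[] //|]; rewrite big_ord0.
move=> a _ _ [n1 [v1 [c1 [Sv1 ->]]]] [n2 [v2 [c2 [Sv2 ->]]]].
exists (n1 + n2)%N, (fun k => match split k with inl k1 => v1 k1 | inr k2 => v2 k2 end),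
  (fun k => match split k with inl k1 => a * c1 k1 | inr k2 => c2 k2 end).
split=> [k|]; first by case: (split k).
rewrite big_split_ord /= scaler_sumr; congr (_ + _); apply: eq_bigr => k _.
  by rewrite (unsplitK (inl _ k)) scalerA.
by rewrite (unsplitK (inr _ k)).
Qed.

Lemma gen_span_in v : S v -> gen_span S v.
Proof. by move=> Sv; exists 1%N, (fun _ => v), (fun _ => 1); rewrite big_ord1 scale1r. Qed.

End Span.

Section HomSubmodules.
Variables (R : comPzRingType) (M : lmodType R) (E : (M -> R) -> Prop).
Hypothesis E_hom : hom_submod E.

Definition restr_hom (N : M -> Prop) (g : M -> R) :=
  exists f, E f /\ forall x, N x -> g x = f x.

Lemma submodT : is_submod (fun _ : M => True). Proof. by []. Qed.

Lemma hom_submod_lin f : E f -> lin_on (fun _ => True) f.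
Proof. by move=> Ef a x y _ _; case: E_hom => + _; apply. Qed.

Lemma hom_submod_comb : comb_closed (fun _ => True) E.
Proof.
case: E_hom => _ [E0 [ED EZ]]; elim=> [|n IH] a e eE.
  by exists (fun _ => 0); split=> // x _; rewrite big_ord0.
have [f [Ef fe]] := IH (fun l => a (lift ord0 l)) (fun l => e (lift ord0 l)) (fun l => eE _).
exists (fun x => a ord0 * e ord0 x + f x); split; first by apply: ED => //; apply: EZ.
by move=> x _; rewrite big_ord_recl fe.
Qed.

Variables (N : M -> Prop).
Hypothesis N_submod : is_submod N.

Lemma restr_hom_lin g : restr_hom N g -> lin_on N g.
Proof.
move=> [f [Ef gf]] a x y Nx Ny; rewrite !gf //; last exact: submodZD.
exact: hom_submod_lin.
Qed.

Lemma restr_hom_comb : comb_closed N (restr_hom N).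
Proof.
move=> n a e /(@choice _ _ _) [f ef].
have [F [EF Ff]] := hom_submod_comb a (fun l => proj1 (ef l)).
exists F; split; first by exists F.
by move=> x Nx; rewrite Ff //; apply: eq_bigr => l _; case: (ef l) => _ ->.
Qed.

End HomSubmodules.

(** * Localization by fractions *)

Section Fractions.
Variables (R : comPzRingType) (M : lmodType R).

Lemma lcomb_den n (c : 'I_n -> R * R) (b : 'I_n -> M * R) :
  (lcomb c b).2 = \prod_k ((c k).2 * (b k).2).
Proof.
elim: n c b => [|n IH] c b; first by rewrite /lcomb !big_ord0.
by rewrite /lcomb big_ord_recl /= -/(lcomb _ _) IH [RHS]big_ord_recl.
Qed.

Lemma lcomb_num n (c : 'I_n -> R * R) (b : 'I_n -> M * R) :
  (lcomb c b).1 =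
  \sum_k (\prod_(j | j != k) ((c j).2 * (b j).2) * (c k).1) *: (b k).1.
Proof.
elim: n c b => [|n IH] c b; first by rewrite /lcomb !big_ord0.
rewrite /lcomb big_ord_recl /= -!/(lcomb _ _) IH lcomb_den [RHS]big_ord_recl /=.
rewrite scaler_sumr scalerA; congr (_ *: _ + _).
  by rewrite [in RHS]big_mkcond big_ord_recl /= mul1r mulrC.
apply: eq_bigr => k _; rewrite scalerA; congr (_ *: _).
rewrite [in RHS]big_mkcond big_ord_recl /= [in LHS]big_mkcond mulrA.
by under [in RHS]eq_bigr do rewrite (inj_eq lift_inj).
Qed.

End Fractions.

Section LocalZero.
Variables (R : comPzRingType) (p : R -> Prop) (V : lmodType R).

(* v vanishes in V_p; ring elements are handled through V := R^o. *)
Definition loc_zero (v : V) := exists u, ~ p u /\ u *: v = 0.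

Hypothesis p_prime : prime_ideal p.

Lemma loc_zero_unitZ a (v : V) : ~ p a -> loc_zero (a *: v) -> loc_zero v.
Proof.
move=> pa [u [pu uv]]; exists (u * a); split; last by rewrite -scalerA.
exact: prime_notinM.
Qed.

Lemma loc_zero_uniform (I : finType) (v : I -> V) :
  (forall i, loc_zero (v i)) -> exists u, ~ p u /\ forall i, u *: v i = 0.
Proof.
move=> /choice [w wv]; exists (\prod_i w i); split.
  by apply: prime_notin_prod => // i; case: (wv i).
by move=> i; rewrite (bigD1 i) //= mulrC -scalerA; case: (wv i) => _ ->; rewrite scaler0.
Qed.

End LocalZero.

Section LocalSubmodules.
Variables (R : comPzRingType) (M : lmodType R) (p : R -> Prop) (N : M -> Prop).
Variable F : M * R -> Prop.
Hypothesis F_sub : lsubmod p N F.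

Lemma lsubmod_lcomb n (c : 'I_n -> R * R) (b : 'I_n -> M * R) :
  (forall k, F (b k)) -> (forall k, ~ p (c k).2) -> F (lcomb c b).
Proof.
case: F_sub => _ [_ [F0 [FD FZ]]] Fb pc.
by apply: big_ind => // k _; apply: FZ.
Qed.

Lemma lsubmod_feq_addl x y z :
  F x -> F y -> lfrac p N z -> feq p x (fadd y z) -> F z.
Proof.
case: F_sub => _ [F_feq [_ [FD FZ]]] Fx Fy [Nz pz] [u [pu xyz]].
(* w is x - y, brought to a denominator that makes it feq to z. *)
pose w := fadd (fscale (z.2, z.2) x) (fscale (- z.2, z.2) y).
apply: (F_feq w) => //; first by apply: FD; apply: FZ.
exists u; split=> //.
have -> : z.2 *: w.1 - w.2 *: z.1 =
          (z.2 * z.2) *: ((fadd y z).2 *: x.1 - x.2 *: (fadd y z).1).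
  rewrite /= !(scalerDr, scalerBr, scalerN, scaleNr, scalerA, opprD) addrA -!scaleNr.
  by congr (_ *: _ + _ *: _ + _ *: _); ring.
by rewrite scalerA mulrC -scalerA xyz scaler0.
Qed.

End LocalSubmodules.

Section SpanAndKernelFractions.
Variables (R : comPzRingType) (M : lmodType R) (p : R -> Prop) (N : M -> Prop).
Hypotheses (p_prime : prime_ideal p) (N_submod : is_submod N).

Definition span_frac n (s : 'I_n -> M) (x : M * R) :=
  lfrac p N x /\ exists w (c : 'I_n -> R), ~ p w /\ w *: x.1 = \sum_k c k *: s k.

Definition ker_frac n (e : 'I_n -> M -> R) (x : M * R) :=
  lfrac p N x /\ forall j, loc_zero p (e j x.1 : R^o).

Lemma lsubmod_span_frac n (s : 'I_n -> M) :
  (forall k, N (s k)) -> lsubmod p N (span_frac s).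
Proof.
move=> sN; split; last split; last split; last split.
- by move=> x [].
- move=> x y [[_ px] [w [c [pw wx]]]] yN [u [pu uxy]]; split=> //.
  move/eqP: uxy; rewrite scalerBr subr_eq0 => /eqP uxy.
  exists (w * u * x.2), (fun k => u * y.2 * c k); split.
    by apply: prime_notinM => //; apply: prime_notinM.
  rewrite -mulrA -!scalerA -uxy !scalerA -mulrA mulrC -scalerA wx scaler_sumr.
  by apply: eq_bigr => k _; rewrite scalerA.
- split; first by split; [exact: submod0 | exact: prime_notin1].
  exists 1, (fun _ => 0); split; first exact: prime_notin1.
  by rewrite scaler0 big1 // => k _; rewrite scale0r.
- move=> x y [[Nx px] [w [c [pw wx]]]] [[Ny py] [w' [c' [pw' wy]]]].
  split; first by split; [apply: submodD => //; apply: submodZ | apply: prime_notinM].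
  exists (w * w'), (fun k => w' * y.2 * c k + w * x.2 * c' k).
  split; first exact: prime_notinM.
  have -> : (w * w') *: (fadd x y).1 = (w' * y.2) *: (w *: x.1) + (w * x.2) *: (w' *: y.1).
    by rewrite scalerDr !scalerA; congr (_ *: _ + _ *: _); ring.
  rewrite wx wy !scaler_sumr -big_split /=.
  by apply: eq_bigr => k _; rewrite !scalerA -scalerDl.
- move=> a x pa [[Nx px] [w [c [pw wx]]]].
  split; first by split; [exact: submodZ | exact: prime_notinM].
  exists w, (fun k => a.1 * c k); split=> //=.
  rewrite scalerA mulrC -scalerA wx scaler_sumr.
  by apply: eq_bigr => k _; rewrite scalerA.
Qed.

Lemma lsubmod_ker_frac n (e : 'I_n -> M -> R) :
  (forall j, lin_on N (e j)) -> lsubmod p N (ker_frac e).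
Proof.
move=> e_lin; split; last split; last split; last split.
- by move=> x [].
- move=> x y [[Nx px] ex] [Ny py] [u [pu uxy]]; split=> // j.
  have [v [pv vex]] := ex j.
  have := congr1 (e j) uxy.
  rewrite (lin_on0 N_submod (e_lin j)) (lin_onZ N_submod (e_lin j)); last first.
    by apply: submodB => //; apply: submodZ.
  rewrite (lin_onB (e_lin j)) ?(lin_onZ N_submod (e_lin j)) //; try by apply: submodZ.
  move=> {}uxy; exists (v * u * x.2); split.
    by apply: prime_notinM => //; apply: prime_notinM.
  rewrite /GRing.scale /= (_ : v * u * x.2 * e j y.1 =
    u * y.2 * (v * e j x.1) - v * (u * (y.2 * e j x.1 - x.2 * e j y.1))); last by ring.
  by rewrite [v * _]vex uxy !mulr0 subr0.
- split; first by split; [exact: submod0 | exact: prime_notin1].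
  move=> j; exists 1; split; first exact: prime_notin1.
  by rewrite (lin_on0 N_submod (e_lin j)) scaler0.
- move=> x y [[Nx px] ex] [[Ny py] ey].
  split; first by split; [apply: submodD => //; apply: submodZ | apply: prime_notinM].
  move=> j; have [v [pv vex]] := ex j; have [v' [pv' vey]] := ey j.
  exists (v * v'); split; first exact: prime_notinM.
  rewrite /GRing.scale /= (lin_onD (e_lin j)) ?(lin_onZ N_submod (e_lin j)) //;
    try by apply: submodZ.
  rewrite (_ : v * v' * (y.2 * e j x.1 + x.2 * e j y.1) =
    v' * y.2 * (v * e j x.1) + v * x.2 * (v' * e j y.1)); last by ring.
  by rewrite [v * e j x.1]vex [v' * e j y.1]vey !mulr0 addr0.
- move=> a x pa [[Nx px] ex].
  split; first by split; [exact: submodZ | exact: prime_notinM].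
  move=> j; have [v [pv vex]] := ex j.
  exists v; split=> //; rewrite /GRing.scale /= (lin_onZ N_submod (e_lin j)) //.
  by rewrite mulrCA [v * _]vex mulr0.
Qed.
End SpanAndKernelFractions.

(** * Unit pairings and free summands *)

Lemma det_scale_ker (R : comPzRingType) n (A : 'M[R]_n) (v : 'cV_n) :
  A *m v = 0 -> \det A *: v = 0.
Proof. by move=> Av; rewrite -mul_scalar_mx -mul_adj_mx -mulmxA Av mulmx0. Qed.

Section PairingDefs.
Variables (R : comPzRingType) (M : lmodType R).

Definition pairing_mx n (e : 'I_n -> M -> R) (s : 'I_n -> M) : 'M[R]_n :=
  \matrix_(j, k) e j (s k).

Definition unit_pairing (p : R -> Prop) (N : M -> Prop) (E : (M -> R) -> Prop)
    (S : M -> Prop) n :=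
  exists (s : 'I_n -> M) (e : 'I_n -> M -> R),
    [/\ forall k, N (s k) /\ gen_span S (s k), forall j, E (e j)
      & ~ p (\det (pairing_mx e s))].

End PairingDefs.

Section PairingToSummand.
Variables (R : comPzRingType) (M : lmodType R) (p : R -> Prop) (N : M -> Prop).
Hypotheses (p_prime : prime_ideal p) (N_submod : is_submod N).
Variables (n : nat) (s : 'I_n -> M) (e : 'I_n -> M -> R).
Hypotheses (sN : forall k, N (s k)) (e_lin : forall j, lin_on N (e j)).

Let A := pairing_mx e s.
Let b k : M * R := (s k, 1).

Lemma pairing_sum j (c : 'I_n -> R) : e j (\sum_k c k *: s k) = \sum_k A j k * c k.
Proof.
rewrite (lin_on_sum N_submod (e_lin j)) //.
by apply: eq_bigr => k _; rewrite mxE mulrC.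
Qed.

Lemma det_pairing_ker (c : 'I_n -> R) :
  (forall j, e j (\sum_k c k *: s k) = 0) -> forall k, \det A * c k = 0.
Proof.
move=> ec0 k; have Ac0 : A *m \col_k c k = 0.
  apply/matrixP => j i; rewrite mxE [RHS]mxE -[in RHS](ec0 j) pairing_sum.
  by apply: eq_bigr => l _; rewrite !mxE.
by have /matrixP/(_ k 0) := det_scale_ker Ac0; rewrite !mxE.
Qed.

Lemma lcomb_basis (c : 'I_n -> R * R) :
  lcomb c b = (\sum_k (\prod_(j | j != k) (c j).2 * (c k).1) *: s k, \prod_k (c k).2).
Proof.
rewrite [LHS]surjective_pairing lcomb_num lcomb_den.
by congr (_, _); [apply: eq_bigr => k _|]; under eq_bigr do rewrite mulr1.
Qed.

Lemma span_frac_lcomb (c : 'I_n -> R * R) :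
  (forall k, ~ p (c k).2) -> span_frac p N s (lcomb c b).
Proof.
move=> pc; rewrite lcomb_basis; split.
  by split; [apply: submod_sum | apply: prime_notin_prod].
exists 1, (fun k => \prod_(j | j != k) (c j).2 * (c k).1); split; first exact: prime_notin1.
by rewrite scale1r.
Qed.

Lemma span_frac_basis k : span_frac p N s (b k).
Proof.
split; first by split; [exact: sN | exact: prime_notin1].
exists 1, (fun l => (l == k)%:R); split; first exact: prime_notin1.
by rewrite scale1r (bigD1 k) //= eqxx scale1r big1 ?addr0 // => l /negbTE ->; rewrite scale0r.
Qed.

Lemma lcomb_basis_const_den (a : 'I_n -> R) d :
  (lcomb (fun k => (a k, d)) b).2 = \prod_(k < n) d /\
  d *: (lcomb (fun k => (a k, d)) b).1 = (\prod_(k < n) d) *: \sum_k a k *: s k.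
Proof.
rewrite lcomb_basis /=; split=> //; rewrite !scaler_sumr; apply: eq_bigr => k _.
by rewrite !scalerA mulrA [in RHS](bigD1 k).
Qed.

Lemma span_frac_spanned x :
  span_frac p N s x -> exists c, (forall k, ~ p (c k).2) /\ feq p x (lcomb c b).
Proof.
move=> [[Nx px] [w [a [pw wx]]]].
have pd : ~ p (w * x.2) by exact: prime_notinM.
exists (fun k => (a k, w * x.2)); split=> // .
have [L2 L1] := lcomb_basis_const_den a (w * x.2).
exists (w * x.2); split=> //.
set L := lcomb _ b; rewrite scalerBr.
have -> : (w * x.2) *: (L.2 *: x.1) = (x.2 * \prod_(k < n) (w * x.2)) *: \sum_k a k *: s k.
  by rewrite L2 -wx !scalerA; congr (_ *: _); ring.
have -> : (w * x.2) *: (x.2 *: L.1) = x.2 *: ((w * x.2) *: L.1) by rewrite !scalerA mulrC.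
by rewrite L1 scalerA subrr.
Qed.

Hypothesis detA : ~ p (\det A).

Lemma lcomb_basis_free (c : 'I_n -> R * R) :
  (forall k, ~ p (c k).2) -> feq p (lcomb c b) (fzero M) -> forall k, req p (c k) (0, 1).
Proof.
move=> pc [u [pu]]; rewrite lcomb_basis /= scale1r scaler0 subr0 scaler_sumr => uc0 k.
have /(_ k) Dc0 : forall k, \det A * (u * (\prod_(j | j != k) (c j).2 * (c k).1)) = 0.
  apply: det_pairing_ker => j; under eq_bigr do rewrite -scalerA.
  by rewrite uc0 (lin_on0 N_submod (e_lin j)).
exists (\det A * u * \prod_(j | j != k) (c j).2); split.
  by apply: prime_notinM => //; [apply: prime_notinM | apply: prime_notin_prod].
by rewrite /= mul1r mulr0 subr0 -!mulrA.
Qed.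

Lemma span_frac_ker_frac0 x : span_frac p N s x -> ker_frac p N e x -> feq p x (fzero M).
Proof.
move=> [[Nx px] [w [c [pw wx]]]] [_ /loc_zero_uniform [] // v [pv vx]].
have Dc0 : forall k, \det A * (v * c k) = 0.
  apply: det_pairing_ker => j; under eq_bigr do rewrite -scalerA.
  rewrite -scaler_sumr -wx !(lin_onZ N_submod (e_lin j)) //; last exact: submodZ.
  by rewrite mulrCA [v * _]vx mulr0.
exists (\det A * v * w); split; first by apply: prime_notinM => //; apply: prime_notinM.
rewrite /= scale1r scaler0 subr0 -scalerA wx scaler_sumr big1 // => k _.
by rewrite scalerA -mulrA Dc0 scale0r.
Qed.

Section Projection.
Variable f : 'I_n -> M -> R.
Hypothesis f_adj : forall k x, N x -> f k x = \sum_l \adj A k l * e l x.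

Lemma pairing_proj_ker m j : N m -> e j (\det A *: m - \sum_k f k m *: s k) = 0.
Proof.
move=> Nm; have Nfs : N (\sum_k f k m *: s k) by apply: submod_sum.
rewrite (lin_onB (e_lin j)) ?(lin_onZ N_submod (e_lin j)) ?pairing_sum //; last exact: submodZ.
have -> : \sum_k A j k * f k m = (A *m (\adj A *m \col_l e l m)) j 0.
  rewrite mxE; apply: eq_bigr => k _; rewrite f_adj // mxE; congr (_ * _).
  by rewrite [RHS]mxE; apply: eq_bigr => l _; rewrite !mxE.
by rewrite mulmxA mul_mx_adj mul_scalar_mx !mxE subrr.
Qed.

Lemma pairing_decomp x : lfrac p N x ->
  exists g, ker_frac p N e g /\
    feq p x (fadd (lcomb (fun k => (f k x.1, \det A * x.2)) b) g).
Proof.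
move=> [Nx px]; pose d := \det A * x.2.
have pd : ~ p d by exact: prime_notinM.
exists (\det A *: x.1 - \sum_k f k x.1 *: s k, d); split.
  split; first by split=> //=; apply: submodB => //; [apply: submodZ | apply: submod_sum].
  by move=> j; exists 1; split; [exact: prime_notin1 | rewrite /= pairing_proj_ker // scaler0].
have [L2 L1] := lcomb_basis_const_den (fun k => f k x.1) d.
exists 1; split; first exact: prime_notin1.
rewrite scale1r /= L1 L2 scalerBr addrCA subrr addr0 !scalerA.
by rewrite (_ : x.2 * _ = \prod_(k < n) d * d) ?subrr // /d; ring.
Qed.

End Projection.
End PairingToSummand.

Section SummandToPairing.
Variables (R : comPzRingType) (M : lmodType R) (p : R -> Prop) (N : M -> Prop)
  (E : (M -> R) -> Prop).
Hypotheses (p_prime : prime_ideal p) (N_submod : is_submod N)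
  (E_lin : forall f, E f -> lin_on N f).
Variables (n : nat) (F G : M * R -> Prop) (b : 'I_n -> M * R)
  (e : 'I_n -> M -> R) (u : 'I_n -> R).
Hypotheses (F_sub : lsubmod p N F) (G_sub : lsubmod p N G)
  (FG0 : forall x, F x -> G x -> feq p x (fzero M)) (bF : forall k, F (b k))
  (b_free : forall c : 'I_n -> R * R, (forall k, ~ p (c k).2) ->
     feq p (lcomb c b) (fzero M) -> forall k, req p (c k) (0, 1))
  (pu : forall k, ~ p (u k))
  (proj : forall x, lfrac p N x -> exists g, G g /\
     feq p x (fadd (lcomb (fun k => (e k x.1, u k * x.2)) b) g)).

Let bN k : lfrac p N (b k). Proof. by case: F_sub => + _; apply. Qed.

Lemma basis_numerators_free (r : 'I_n -> R) v :
  ~ p v -> v *: \sum_k r k *: (b k).1 = 0 -> forall k, loc_zero p (r k : R^o).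
Proof.
move=> pv vr0 k; pose c k : R * R := (r k * (b k).2, 1).
have num : (lcomb c b).1 = (\prod_k (b k).2) *: \sum_k r k *: (b k).1.
  rewrite lcomb_num scaler_sumr; apply: eq_bigr => l _; rewrite scalerA [in RHS](bigD1 l) //=.
  by congr (_ *: _); under eq_bigr do rewrite mul1r; ring.
have pc l : ~ p (c l).2 by exact: prime_notin1.
have c0 : feq p (lcomb c b) (fzero M).
  exists v; split=> //.
  by rewrite /= scale1r scaler0 subr0 num scalerA mulrC -scalerA vr0 scaler0.
have [w [pw]] := b_free pc c0 k; rewrite /= mul1r mulr0 subr0 => wrb.
exists (w * (b k).2); split; first by apply: prime_notinM => //; case: (bN k).
by rewrite /GRing.scale /= mulrAC -mulrA.
Qed.

(* The projection of b_l is b_l itself: its G-component also lies in F, hence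
   vanishes, and comparing coordinates in the free basis b gives the claim. *)
Lemma proj_coord_basis l k :
  loc_zero p ((k == l)%:R * (u k * (b k).2) - e k (b l).1 : R^o).
Proof.
have [g [Gg bLg]] := proj (bN l).
set c := fun k => _ in bLg; set L := lcomb c b in bLg.
have pc j : ~ p (c j).2 by apply: prime_notinM => //; case: (bN l).
have Fg : F g.
  have FL : F L := lsubmod_lcomb F_sub bF pc.
  apply: (lsubmod_feq_addl F_sub (bF l) FL _ bLg).
  by case: G_sub => + _; apply.
have [w [pw]] := FG0 Fg Gg; rewrite /= scale1r scaler0 subr0 => wg.
have [v [pv vbLg]] := bLg.
have key : (v * w * g.2) *: (L.2 *: (b l).1 - (b l).2 *: L.1) = 0.
  have -> : (v * w * g.2) *: (L.2 *: (b l).1 - (b l).2 *: L.1) =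
     w *: (v *: ((fadd L g).2 *: (b l).1 - (b l).2 *: (fadd L g).1)) +
     (v * (b l).2 * L.2) *: (w *: g.1).
    rewrite /= !(scalerDr, scalerBr, scalerN, scalerA, opprD) addrA.
    rewrite [X in _ = _ + X](_ : _ = (w * v * (b l).2 * L.2) *: g.1);
      last by congr (_ *: _); ring.
    by rewrite subrK; congr (_ *: _ - _ *: _); ring.
  by rewrite vbLg wg !scaler0 addr0.
pose P j := \prod_(i | i != j) ((c i).2 * (b i).2).
have expand : L.2 *: (b l).1 - (b l).2 *: L.1 =
    \sum_j (L.2 * (j == l)%:R - (b l).2 * (P j * (c j).1)) *: (b j).1.
  under eq_bigr do rewrite scalerBl.
  rewrite sumrB (bigD1 l) //= eqxx mulr1 big1 ?addr0; last first.
    by move=> j /negbTE ->; rewrite mulr0 scale0r.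
  by rewrite lcomb_num scaler_sumr; congr (_ - _); apply: eq_bigr => j _; rewrite scalerA.
rewrite expand in key.
have pvwg : ~ p (v * w * g.2).
  by do 2?apply: prime_notinM => //; case: G_sub => /(_ g Gg) [].
have := basis_numerators_free pvwg key k.
have -> : L.2 * (k == l)%:R - (b l).2 * (P k * (c k).1) =
    ((b l).2 * P k) * ((k == l)%:R * (u k * (b k).2) - e k (b l).1).
  by rewrite /L /P lcomb_den (bigD1 k) //=; ring.
apply: loc_zero_unitZ => //; apply: prime_notinM => //; first by case: (bN l).
by apply: prime_notin_prod => // j; apply: prime_notinM => //; case: (bN j).
Qed.

Variable S : M -> Prop.
Hypotheses (FS : forall x, F x -> lspan p N S x) (eE : forall k, E (e k)).

(* A unit multiple a_l b_l of each basis element lies in <S>; on these elements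
   the pairing matrix is locally diagonal with unit entries. *)
Lemma unit_pairing_of_free_summand : unit_pairing p N E S n.
Proof.
have [a aS] : exists a : 'I_n -> R, forall l, ~ p (a l) /\ gen_span S (a l *: (b l).1).
  apply: (@choice _ _ (fun l a => ~ p a /\ gen_span S (a *: (b l).1))) => l.
  have [_ [m [t [Sm pt [v [pv]]]]]] := FS (bF l).
  move/eqP; rewrite scalerBr subr_eq0 => /eqP vbm.
  exists (v * t); split; first exact: prime_notinM.
  by rewrite -scalerA vbm scalerA; apply: (submodZ (gen_span_submod S)).
have [W [pW Wdiag]] := loc_zero_uniform p_prime
  (fun lk : 'I_n * 'I_n => proj_coord_basis lk.1 lk.2).
exists (fun l => a l *: (b l).1), e; split=> //.
  by move=> l; split; [apply: submodZ => //; case: (bN l) | case: (aS l)].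
pose d := \row_l (a l * (u l * (b l).2)).
have WA : W *: pairing_mx e (fun l => a l *: (b l).1) = W *: diag_mx d.
  apply/matrixP => k l; rewrite !mxE (lin_onZ N_submod (E_lin (eE k))); last by case: (bN l).
  have /eqP := Wdiag (l, k); rewrite /= /GRing.scale /= mulrBr subr_eq0 => /eqP Wkl.
  rewrite mulrCA -Wkl; case: eqVneq => [->|_]; rewrite ?mulr1n ?mulr0n; ring.
move=> pA; have := congr1 determinant WA; rewrite !detZ det_diag => detWA.
have : p (W ^+ n * \prod_l d 0 l).
  by rewrite -detWA; apply: (idealMl (prime_is_ideal p_prime)).
apply: prime_notinM => //; first exact: prime_notinX.
apply: prime_notin_prod => // l; rewrite mxE.
by apply: prime_notinM => //; [case: (aS l) | apply: prime_notinM => //; case: (bN l)].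
Qed.
End SummandToPairing.

Section DeltaByPairings.
Variables (R : comPzRingType) (M : lmodType R) (p : R -> Prop) (N : M -> Prop)
  (E : (M -> R) -> Prop) (S : M -> Prop).
Hypotheses (p_prime : prime_ideal p) (N_submod : is_submod N)
  (E_lin : forall f, E f -> lin_on N f)
  (E_comb : comb_closed N E).

Lemma span_frac_lspan n (s : 'I_n -> M) x :
  (forall k, gen_span S (s k)) -> span_frac p N s x -> lspan p N S x.
Proof.
move=> sS [[Nx px] [w [c [pw wx]]]]; split=> //.
exists (\sum_k c k *: s k), (w * x.2); split.
- exact: (submod_sum (gen_span_submod S)).
- exact: prime_notinM.
- by exists 1; split; [exact: prime_notin1 | rewrite /= -wx scale1r scalerA mulrC subrr].
Qed.

Lemma has_summand_of_unit_pairing n : unit_pairing p N E S n -> has_summand p N E S n.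
Proof.
move=> [s [e [sNS eE detA]]].
have sN k : N (s k) by case: (sNS k).
have e_lin j : lin_on N (e j) by apply: E_lin.
have [f f_adj] := @choice _ _ _ (fun k => E_comb (fun l => \adj (pairing_mx e s) k l) eE).
exists (span_frac p N s); split; last by move=> x; apply: span_frac_lspan => k; case: (sNS k).
exists (ker_frac p N e), (fun k => (s k, 1)); split.
- exact: lsubmod_span_frac.
- exact: lsubmod_ker_frac.
- move=> x xN.
  have [g [Gg xfg]] :=
    pairing_decomp p_prime N_submod sN e_lin detA (fun k => proj2 (f_adj k)) xN.
  exists (lcomb (fun k => (f k x.1, \det (pairing_mx e s) * x.2)) (fun k => (s k, 1))), g.
  split=> //; apply: span_frac_lcomb => // k; apply: prime_notinM => //; by case: xN.
- exact: span_frac_ker_frac0.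
split.
- exact: span_frac_basis.
- exact: span_frac_spanned.
- move=> c pc c0 k; exact: (lcomb_basis_free p_prime N_submod sN e_lin detA pc c0).
exists f, (fun _ => \det (pairing_mx e s)); split.
  by move=> k; split; [case: (f_adj k) |].
by move=> x xN; apply: pairing_decomp => // k; case: (f_adj k).
Qed.

Lemma unit_pairing_of_has_summand n : has_summand p N E S n -> unit_pairing p N E S n.
Proof.
move=> [F [[G [b [F_sub G_sub _ FG0 [bF _ b_free [e [u [eu proj]]]]]]] FS]].
have [eE pu] : (forall k, E (e k)) /\ (forall k, ~ p (u k)).
  by split=> k; case: (eu k).
exact: (unit_pairing_of_free_summand p_prime N_submod E_lin F_sub G_sub FG0 bF b_free
  pu proj FS eE).
Qed.

Lemma unit_pairing0 : unit_pairing p N E S 0.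
Proof.
exists (fun _ => 0), (fun _ _ => 0); split; try by case.
by rewrite det_mx00; apply: prime_notin1.
Qed.

Lemma delta_is_unit_pairing d :
  unit_pairing p N E S d -> (forall n, unit_pairing p N E S n -> (n <= d)%N) ->
  delta_is p N E S d.
Proof.
move=> Pd dmax; split; first exact: has_summand_of_unit_pairing.
by move=> n /unit_pairing_of_has_summand; apply: dmax.
Qed.

End DeltaByPairings.

Lemma unit_pairing_bound (R : comPzRingType) (M : lmodType R) (p : R -> Prop)
    (N : M -> Prop) (E : (M -> R) -> Prop) (S : M -> Prop) g (gen : 'I_g -> M) :
  prime_ideal p -> is_submod N -> (forall f, E f -> lin_on N f) ->
  (forall t, N (gen t)) -> (forall m, N m -> exists c : 'I_g -> R, m = \sum_t c t *: gen t) ->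
  forall n, unit_pairing p N E S n -> (n <= g)%N.
Proof.
move=> p_prime N_submod E_lin genN genP n [s [e [sNS eE detA]]].
rewrite leqNgt; apply/negP => gn; apply: detA.
have [cf cfP] := @choice _ _ _ (fun k => genP (s k) (proj1 (sNS k))).
pose X := \matrix_(j, t) e j (gen t); pose Y := \matrix_(t, k) cf k t.
have -> : pairing_mx e s = 0 + X *m Y.
  apply/matrixP => j k; rewrite add0r !mxE (cfP k) (lin_on_sum N_submod (E_lin _ (eE j))) //.
  by apply: eq_bigr => t _; rewrite !mxE mulrC.
have p_ideal := prime_is_ideal p_prime.
have := minors_in_low_rank_update p_ideal X Y (@minors_in0 _ _ p_ideal (n - g.+1) n n).
rewrite addSnnS subnK //; exact: minors_in_full.
Qed.

Lemma exists_maxn (P : nat -> Prop) m :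
  (exists n, P n) -> (forall n, P n -> (n <= m)%N) ->
  exists n, P n /\ forall k, P k -> (k <= n)%N.
Proof.
move=> exP ubP; pose b n := if excluded_middle_informative (P n) then true else false.
have bP n : reflect (P n) (b n) by rewrite /b; case: excluded_middle_informative; constructor.
have exb : exists n, b n by have [n Pn] := exP; exists n; apply/bP.
have ubb n : b n -> (n <= m)%N by move/bP; apply: ubP.
case: (ex_maxnP exb ubb) => n /bP Pn maxn.
by exists n; split=> // k /bP; apply: maxn.
Qed.

(** * Splitting off a free summand *)

Section SplitSummand.
Variables (R : comPzRingType) (M : lmodType R) (E : (M -> R) -> Prop) (S : M -> Prop)
  (i : nat) (phi : M -> 'rV[R]_i) (iota : 'rV[R]_i -> M) (p : R -> Prop).
Hypotheses (p_prime : prime_ideal p) (E_hom : hom_submod E)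
  (phi_lin : linear phi) (iota_lin : linear iota) (phiK : cancel iota phi)
  (iotaS : forall v, gen_span S (iota v)) (phiE : forall j : 'I_i, E (fun m => phi m ord0 j)).

HB.instance Definition _ := GRing.isLinear.Build R M 'rV[R]_i *:%R phi phi_lin.
HB.instance Definition _ := GRing.isLinear.Build R 'rV[R]_i M *:%R iota iota_lin.

Let M' := fun m : M => phi m = 0.
Let S' := fun m' : M => exists s, S s /\ m' = s - iota (phi s).
Let E' := restr_hom E M'.

Definition proj_compl m := m - iota (phi m).

Lemma submod_compl : is_submod M'.
Proof. by split=> [|a x y x0 y0]; rewrite /M' ?linear0 // linearP /= x0 y0 scaler0 addr0. Qed.

Lemma gen_span_S'_S m : gen_span S' m -> gen_span S m.
Proof.
move=> [n [v [c [vS ->]]]]; apply: (submod_sum (gen_span_submod S)) => k.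
have [s [Ss ->]] := vS k.
by apply: (submodB (gen_span_submod S)); [apply: gen_span_in | apply: iotaS].
Qed.

Lemma proj_compl_ker m : M' (proj_compl m).
Proof. by rewrite /M' /proj_compl linearB /= phiK subrr. Qed.

Lemma gen_span_proj_compl m : gen_span S m -> gen_span S' (proj_compl m).
Proof.
move=> [n [v [c [vS ->]]]].
have -> : proj_compl (\sum_k c k *: v k) = \sum_k c k *: proj_compl (v k).
  rewrite /proj_compl !linear_sum /= -big_split.
  by apply: eq_bigr => k _; rewrite !linearZ /= scalerBr scalerN.
apply: (submod_sum (gen_span_submod S')) => k.
by apply: gen_span_in; exists (v k).
Qed.

Lemma unit_pairing_extend d :
  unit_pairing p M' E' S' d -> unit_pairing p (fun _ => True) E S (d + i).
Proof.
move=> [s' [e' [s'NS e'E' detA']]].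
have [f fe'] := @choice _ _ _ e'E'.
pose s k := match split k with inl b => s' b | inr m => iota (delta_mx 0 m) end.
pose e k := match split k with inl a => f a | inr l => fun x => phi x ord0 l end.
exists s, e; split.
- move=> k; split=> //; rewrite /s; case: (split k) => [b|m]; last exact: iotaS.
  by apply: gen_span_S'_S; case: (s'NS b).
- by move=> k; rewrite /e; case: (split k) => [a|l]; [case: (fe' a) | apply: phiE].
have -> : pairing_mx e s = block_mx (pairing_mx e' s')
    (\matrix_(a, m) f a (iota (delta_mx 0 m))) 0 1%:M.
  apply/matrixP => j k; rewrite mxE -[j]splitK -[k]splitK /e /s !unsplitK.
  case: (split j) => [a|l]; case: (split k) => [b|m] /=.
  + rewrite block_mxEul mxE; have [_ <-] := fe' a => //; by case: (s'NS b).
  + by rewrite block_mxEur mxE.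
  + by rewrite block_mxEdl mxE; have [-> _] := s'NS b; rewrite mxE.
  + by rewrite block_mxEdr phiK !mxE eqxx /= eq_sym.
by rewrite det_ublock det1 mulr1.
Qed.

Lemma unit_pairing_restrict n :
  unit_pairing p (fun _ => True) E S (n + i) -> unit_pairing p M' E' S' n.
Proof.
move=> [s [e [sS eE detA]]].
pose X := \matrix_(j, l) e j (iota (delta_mx 0 l)).
pose Y := \matrix_(l, k) phi (s k) ord0 l.
have AXY : pairing_mx e s = pairing_mx e (proj_compl \o s) + X *m Y.
  apply/matrixP => j k; rewrite !mxE.
  have -> : s k = proj_compl (s k) + \sum_l phi (s k) ord0 l *: iota (delta_mx 0 l).
    under [X in _ + X]eq_bigr do rewrite -linearZ.
    by rewrite -linear_sum -row_sum_delta /proj_compl subrK.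
  have ej_lin := hom_submod_lin E_hom (eE j).
  rewrite (lin_onD ej_lin) // (lin_on_sum (submodT M) ej_lin) //.
  by congr (_ + _); apply: eq_bigr => l _; rewrite !mxE mulrC.
have [r [c prc]] : exists (r c : 'I_n -> 'I_(n + i)),
    ~ p (\det (mxsub r c (pairing_mx e (proj_compl \o s)))).
  apply: NNPP => nrc; apply: detA; rewrite AXY; apply: minors_in_full.
  apply: (minors_in_low_rank_update (prime_is_ideal p_prime)) => r c.
  by apply: NNPP => prc; apply: nrc; exists r, c.
exists (fun b => proj_compl (s (c b))), (fun a => e (r a)); split.
- by move=> b; split; [apply: proj_compl_ker | apply: gen_span_proj_compl; case: (sS (c b))].
- by move=> a; exists (e (r a)); split.
rewrite (_ : pairing_mx _ _ = mxsub r c (pairing_mx e (proj_compl \o s))) //.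
by apply/matrixP => a b; rewrite !mxE.
Qed.

End SplitSummand.

Theorem lemma4p7 (R : comPzRingType) (M : lmodType R)
  (E : (M -> R) -> Prop) (S : M -> Prop) (i : nat)
  (phi : M -> 'rV[R]_i) (iota : 'rV[R]_i -> M) :
  noetherian R -> fin_gen M -> hom_submod E ->
  (forall a x y, phi (a *: x + y) = a *: phi x + phi y) ->
  (forall a v w, iota (a *: v + w) = a *: iota v + iota w) ->
  (forall v, phi (iota v) = v) ->
  (forall v, gen_span S (iota v)) ->
  (forall j : 'I_i, E (fun m => phi m ord0 j)) ->
  let M' := fun m : M => phi m = 0 in
  let S' := fun m' : M => exists s, S s /\ m' = s - iota (phi s) in
  let E' := fun g : M -> R => exists f, E f /\ forall x, M' x -> g x = f x in
  forall p : R -> Prop, prime_ideal p ->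
    exists d : nat,
      delta_is p (fun _ => True) E S (d + i)%N /\ delta_is p M' E' S' d.
Proof.
move=> _ [g [gen genP]] E_hom phi_lin iota_lin phiK iotaS phiE M' S' E' p p_prime.
have bound n : unit_pairing p (fun _ => True) E S n -> (n <= g)%N.
  exact: (unit_pairing_bound p_prime (submodT M) (hom_submod_lin E_hom)).
have [d [Pd dmax]] : exists d, unit_pairing p M' E' S' d /\
    forall n, unit_pairing p M' E' S' n -> (n <= d)%N.
  apply: (exists_maxn (m := g)); first by exists 0%N; apply: unit_pairing0.
  by move=> n /(unit_pairing_extend phiK iotaS phiE) /bound; apply: leq_trans; apply: leq_addr.
have M'_submod : is_submod M' := submod_compl phi_lin.
exists d; split; apply: delta_is_unit_pairing => //.
- exact: hom_submod_lin.
- exact: hom_submod_comb.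
- exact: unit_pairing_extend.
- move=> n Pn; have [ni | /ltnW ni] := leqP n i; first exact: leq_trans ni (leq_addl _ _).
  rewrite -(subnK ni) leq_add2r; apply: dmax.
  by apply: (unit_pairing_restrict p_prime E_hom phi_lin iota_lin phiK); rewrite subnK.
- exact: restr_hom_lin.
- exact: restr_hom_comb.
Qed.
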